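(* Let $(R,\mathfrak{m},k)$ be a commutative Noetherian local ring, let $x,y\in R$ and let $n\ge0$ be an integer. For an $R$-module $M$ the following are equivalent: (1) there is an exact sequence of $R$-modules $0 \to (R/(x))^n \to M \to R/(y) \to 0$; (2) there is an exact sequence of $R$-modules $R^{n+1} \xrightarrow{T(x,y,a_1,\dots,a_n)} R^{n+1} \to M \to 0$ for some elements $a_1,\dots,a_n\in((x):(0:y))$.
   Context: For $x,y,a_1,\dots,a_n\in R$, $T(x,y,a_1,\dots,a_n)$ denotes the $(n+1)\times(n+1)$ matrix whose upper-left $n\times n$ block is $x$ times the identity matrix, whose last column is $(a_1,\dots,a_n,y)^{T}$, and all of whose other entries are $0$; for $n=0$ it is the $1\times1$ matrix $(y)$. Here $((x):(0:y))=\{r\in R : r\,(0:y)\subseteq (x)\}$, where $(0:y)=\{r\in R: ry=0\}$. *)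

From HB Require Import structures.
From mathcomp Require Import all_boot all_algebra.
From mathcomp Require Import boolp.
Set Implicit Arguments. Unset Strict Implicit. Unset Printing Implicit Defensive.
Import GRing.Theory.
Local Open Scope ring_scope.
Local Open Scope quotient_scope.

Definition is_ideal (R : comNzRingType) (I : R -> Prop) : Prop :=
  [/\ I 0, (forall a b, I a -> I b -> I (a + b)) & (forall r a, I a -> I (r * a))].

Definition noetherian_ring (R : comNzRingType) : Prop :=
  forall I : nat -> R -> Prop,
    (forall k, is_ideal (I k)) ->
    (forall k r, I k r -> I k.+1 r) ->
    exists N, forall k, (N <= k)%N -> forall r, I k r -> I N r.

Definition maximal_ideal (R : comNzRingType) (m : R -> Prop) : Prop :=
  [/\ is_ideal m, ~ m 1 &
      forall J : R -> Prop, is_ideal J -> (forall r, m r -> J r) ->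
        (forall r, J r <-> m r) \/ J 1].

Definition local_ring (R : comNzRingType) : Prop :=
  exists m : R -> Prop, maximal_ideal m /\
    forall m' : R -> Prop, maximal_ideal m' -> forall r, m' r <-> m r.

Definition ann0 (R : comNzRingType) (y : R) : R -> Prop := fun s => s * y = 0.

Definition colon_ann (R : comNzRingType) (x y : R) : R -> Prop :=
  fun r => forall s, ann0 y s -> exists c, r * s = c * x.

Definition pideal (R : comNzRingType) (r : R) : {pred R} :=
  fun a => `[< exists c : R, a = c * r >].

Fact pideal_zmod_closed (R : comNzRingType) (r : R) : zmod_closed (pideal r).
Proof.
split.
  by apply/asboolP; exists 0; rewrite mul0r.
move=> a b /asboolP [c ->] /asboolP [d ->]; apply/asboolP.
by exists (c - d); rewrite mulrBl.
Qed.

HB.instance Definition _ (R : comNzRingType) (r : R) :=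
  GRing.isZmodClosed.Build R (pideal r) (pideal_zmod_closed r).

Section CyclicQuot.
Variables (R : comNzRingType) (r : R).

Definition cycq := Quotient.quot (pideal r).
HB.instance Definition _ := GRing.Zmodule.on cycq.
HB.instance Definition _ := EqQuotient.on cycq.

Definition cycq_scale (a : R) (q : cycq) : cycq := \pi_cycq (a * repr q).

Lemma cycq_scale_pi a b : cycq_scale a (\pi_cycq b) = \pi_cycq (a * b).
Proof.
rewrite /cycq_scale; apply/eqP; rewrite piE /Quotient.equiv.
have : (repr (\pi_cycq b : cycq) == b %[mod cycq]) by rewrite reprK.
rewrite piE /Quotient.equiv => /asboolP [c hc]; apply/asboolP.
by exists (a * c); rewrite -mulrBr hc mulrA.
Qed.

Lemma cycq_scalerA a b v : cycq_scale a (cycq_scale b v) = cycq_scale (a * b) v.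
Proof. by elim/quotW: v => v; rewrite (cycq_scale_pi b) !cycq_scale_pi mulrA. Qed.

Lemma cycq_scale1r : left_id 1 cycq_scale.
Proof. by move=> v; elim/quotW: v => v; rewrite cycq_scale_pi mul1r. Qed.

Lemma cycq_scalerDr : right_distributive cycq_scale +%R.
Proof.
move=> a u v; elim/quotW: u => u; elim/quotW: v => v.
by rewrite -pi_addr (cycq_scale_pi a (u + v)) (cycq_scale_pi a u) (cycq_scale_pi a v) mulrDr pi_addr.
Qed.

Lemma cycq_scalerDl v : {morph cycq_scale^~ v : a b / a + b}.
Proof.
move=> a b; elim/quotW: v => v.
rewrite (cycq_scale_pi (a + b)) (cycq_scale_pi a) (cycq_scale_pi b) mulrDl.
by rewrite -pi_addr.
Qed.

HB.instance Definition _ := GRing.Zmodule_isLmodule.Build R cycq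
  cycq_scalerA cycq_scale1r cycq_scalerDr cycq_scalerDl.

End CyclicQuot.

(* cycq r : lmodType R  is the cyclic R-module R/(r). *)

(* upper-left n x n block x * identity, last column (a_1,...,a_n,y)^T, zeros elsewhere *)
Definition Tmx (R : comNzRingType) (n : nat) (x y : R) (a : 'I_n -> R) : 'M[R]_(n.+1) :=
  \matrix_(i, j)
    if j == ord_max then
      (if unlift ord_max i is Some i' then a i' else y)
    else (if i == j then x else 0).

(* In both conditions M is generated by elements e_1, ..., e_n, m subject to
   x e_i = 0 and y m + sum_i a_i e_i = 0: the e_i are the images of the unit
   vectors of (R/(x))^n, and g sends m to 1.  Given (1), choose m with g m = 1;
   then y m = f u_0 for some u_0, the a_i are minus lifts of its coordinates,
   and injectivity of f forces a_i (0:y) into (x).  Given (2), the presentation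
   defines f and g, and f is injective precisely because a_i (0:y) lies in (x). *)

From HB Require Import structures.
From mathcomp Require Import all_boot all_algebra boolp.
Set Implicit Arguments. Unset Strict Implicit. Unset Printing Implicit Defensive.
Import GRing.Theory.
Local Open Scope ring_scope.
Local Open Scope quotient_scope.

Section CyclicModule.
Variables (R : comNzRingType) (r : R).

Lemma cycq_pi_eq0 a : \pi_(cycq r) a = 0 <-> exists c, a = c * r.
Proof.
rewrite -pi_zeror; split=> [/eqP|h].
  by rewrite -Quotient.idealrBE subr0 => /asboolP.
by apply/eqP; rewrite -Quotient.idealrBE subr0; apply/asboolP.
Qed.

Lemma cycq_scalerE a b : a *: \pi_(cycq r) b = \pi_(cycq r) (a * b).
Proof. exact: cycq_scale_pi. Qed.

Lemma cycq_pi1 : r *: \pi_(cycq r) 1 = 0.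
Proof. by rewrite cycq_scalerE mulr1; apply/cycq_pi_eq0; exists 1; rewrite mul1r. Qed.

Lemma scaler_cycq_eq (M : lmodType R) (m : M) a b :
  r *: m = 0 -> \pi_(cycq r) a = \pi_(cycq r) b -> a *: m = b *: m.
Proof.
move=> rm0 eqab; have : \pi_(cycq r) (a - b) = 0 by rewrite pi_addr pi_oppr eqab subrr.
case/cycq_pi_eq0 => c /eqP; rewrite subr_eq => /eqP ->.
by rewrite scalerDl -scalerA rm0 scaler0 add0r.
Qed.

End CyclicModule.

Section ColumnSnoc.
Variables (R : comNzRingType) (n : nat).

Definition col_snoc (c : 'I_n -> R) (d : R) : 'cV[R]_(n.+1) :=
  \col_j (if unlift ord_max j is Some i then c i else d).

Lemma col_snoc_lift c d i : col_snoc c d (lift ord_max i) 0 = c i.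
Proof. by rewrite mxE liftK. Qed.

Lemma col_snoc_max c d : col_snoc c d ord_max 0 = d.
Proof. by rewrite mxE unlift_none. Qed.

Lemma col_snocE (v : 'cV[R]_(n.+1)) :
  v = col_snoc (fun i => v (lift ord_max i) 0) (v ord_max 0).
Proof. by apply/matrixP=> j k; rewrite ord1 mxE; case: unliftP => [i ->|->]. Qed.

Lemma col_snoc_inj c c' d d' : col_snoc c d = col_snoc c' d' -> c =1 c' /\ d = d'.
Proof.
move=> eq_cd; split=> [i|]; last by rewrite -(col_snoc_max c d) eq_cd col_snoc_max.
by rewrite -(col_snoc_lift c d) eq_cd col_snoc_lift.
Qed.

Lemma Tmx_col_snoc (x y : R) (a : 'I_n -> R) c d :
  Tmx x y a *m col_snoc c d = col_snoc (fun i => x * c i + a i * d) (y * d).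
Proof.
apply/matrixP=> j k; rewrite ord1 mxE [RHS]mxE (bigD1 ord_max) //=.
have offdiag l : l != ord_max -> l != j -> Tmx x y a j l * col_snoc c d l 0 = 0.
  by move=> lmax lj; rewrite !mxE (negbTE lmax) [j == l]eq_sym (negbTE lj) mul0r.
case: unliftP offdiag => [i ->|->] offdiag; last first.
  rewrite big1 ?addr0 => [|l lmax]; last exact: offdiag.
  by rewrite col_snoc_max !mxE eqxx unlift_none.
have imax : lift ord_max i != ord_max by rewrite eq_sym neq_lift.
rewrite (bigD1 (lift ord_max i) imax) /= big1 => [|l /andP[]]; last exact: offdiag.
by rewrite col_snoc_max col_snoc_lift !mxE eqxx (negbTE imax) liftK eqxx addr0 addrC.
Qed.

Definition col_unit (i : 'I_n) : 'cV[R]_(n.+1) := col_snoc (fun k => (k == i)%:R) 0.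

End ColumnSnoc.

Section ColumnCombination.
Variables (R : comNzRingType) (n : nat) (M : lmodType R).

Definition col_comb (e : 'I_n -> M) (m : M) (v : 'cV[R]_(n.+1)) : M :=
  \sum_i v (lift ord_max i) 0 *: e i + v ord_max 0 *: m.

Lemma col_comb_is_linear e m : linear (col_comb e m).
Proof.
move=> r v w; rewrite /col_comb scalerDr scaler_sumr addrACA -big_split !mxE.
rewrite scalerDl scalerA; congr (_ + _).
by apply: eq_bigr => i _; rewrite !mxE scalerDl scalerA.
Qed.

Lemma col_comb_snoc e m c d : col_comb e m (col_snoc c d) = \sum_i c i *: e i + d *: m.
Proof.
rewrite /col_comb col_snoc_max; congr (_ + _).
by apply: eq_bigr => i _; rewrite col_snoc_lift.
Qed.

Lemma col_comb_Tmx x y a e m c d :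
  col_comb e m (Tmx x y a *m col_snoc c d) =
  \sum_i c i *: (x *: e i) + d *: (y *: m + \sum_i a i *: e i).
Proof.
rewrite Tmx_col_snoc col_comb_snoc scalerDr scaler_sumr [RHS]addrCA -big_split /=.
rewrite [RHS]addrC.
congr (_ + _); last by rewrite scalerA mulrC.
by apply: eq_bigr => i _; rewrite !scalerA scalerDl mulrC [d * _]mulrC.
Qed.

End ColumnCombination.

HB.instance Definition _ (R : comNzRingType) (n : nat) (M : lmodType R) e m :=
  GRing.isLinear.Build R 'cV[R]_(n.+1) M *:%R (@col_comb R n M e m)
    (col_comb_is_linear e m).

Lemma linear_col_comb (R : comNzRingType) n (M N : lmodType R) (f : {linear M -> N}) e m v :
  f (@col_comb R n M e m v) = col_comb (f \o e) (f m) v.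
Proof.
rewrite linearD linear_sum /= linearZ; congr (_ + _).
by apply: eq_bigr => i _; rewrite linearZ.
Qed.

Lemma col_comb_units (R : comNzRingType) n (v : 'cV[R]_(n.+1)) :
  v = col_comb (@col_unit R n) (col_snoc (fun=> 0) 1) v.
Proof.
rewrite [LHS]col_snocE; apply/matrixP=> j k; rewrite ord1 /col_comb !mxE summxE.
case: unliftP => [i ->|->].
  rewrite mulr0 addr0 (bigD1 i) //= big1 => [|l li];
    rewrite !mxE liftK ?eqxx ?mulr1 ?addr0 //.
  by rewrite eq_sym (negbTE li) mulr0.
by rewrite mulr1 big1 ?add0r // => i _; rewrite !mxE unlift_none mulr0.
Qed.

Section CyclicCombination.
Variables (R : comNzRingType) (r : R) (n : nat) (M : lmodType R).

Definition cycq_comb (e : 'I_n -> M) (u : {ffun 'I_n -> cycq r}) : M :=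
  \sum_i repr (u i) *: e i.

Definition cycq_unit (i : 'I_n) : {ffun 'I_n -> cycq r} :=
  [ffun k => \pi_(cycq r) (k == i)%:R].

Variable e : 'I_n -> M.
Hypothesis re0 : forall i, r *: e i = 0.

Lemma cycq_comb_pi c : cycq_comb e [ffun i => \pi_(cycq r) (c i)] = \sum_i c i *: e i.
Proof. by apply: eq_bigr => i _; apply: (scaler_cycq_eq (re0 i)); rewrite ffunE reprK. Qed.

Lemma cycq_comb_is_linear : linear (cycq_comb e).
Proof.
move=> a u w; rewrite /cycq_comb scaler_sumr -big_split; apply: eq_bigr => i _ /=.
rewrite scalerA -scalerDl; apply: (scaler_cycq_eq (re0 i)).
by rewrite !ffunE pi_addr -cycq_scalerE !reprK.
Qed.

End CyclicCombination.

Lemma cycq_comb_units (R : comNzRingType) (r : R) n (u : {ffun 'I_n -> cycq r}) :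
  u = cycq_comb (@cycq_unit R r n) u.
Proof.
apply/ffunP=> k; rewrite sum_ffunE (bigD1 k) //= big1 => [|i ik].
  by rewrite !ffunE eqxx cycq_scalerE mulr1 reprK addr0.
by rewrite !ffunE eq_sym (negbTE ik) cycq_scalerE mulr0 pi_zeror.
Qed.

Lemma linear_cycq_comb (R : comNzRingType) (r : R) n (M N : lmodType R)
    (f : {linear M -> N}) (e : 'I_n -> M) (u : {ffun 'I_n -> cycq r}) :
  f (cycq_comb e u) = cycq_comb (f \o e) u.
Proof. by rewrite linear_sum; apply: eq_bigr => i _; rewrite linearZ. Qed.

Lemma cycq_unit_annihilated (R : comNzRingType) (r : R) n (i : 'I_n) :
  r *: cycq_unit r i = 0.
Proof.
apply/ffunP=> k; rewrite !ffunE cycq_scalerE mulrC; apply/cycq_pi_eq0.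
by exists (k == i)%:R.
Qed.

Section PresentationToExtension.
Variables (R : comNzRingType) (x y : R) (n : nat) (M : lmodType R).
Variables (a : 'I_n -> R) (p : {linear 'cV[R]_(n.+1) -> M}).
Hypothesis a_colon : forall i, colon_ann x y (a i).
Hypothesis p_surj : forall m, exists v, p v = m.
Hypothesis p_ker : forall v, p v = 0 <-> exists w, Tmx x y a *m w = v.

Let e i := p (col_unit R i).
Let m := p (col_snoc (fun=> 0) 1).

Lemma p_col_comb v : p v = col_comb e m v.
Proof. by rewrite {1}[v]col_comb_units linear_col_comb. Qed.

Lemma presentation_relations c d :
  \sum_i c i *: (x *: e i) + d *: (y *: m + \sum_i a i *: e i) = 0.
Proof. by rewrite -col_comb_Tmx -p_col_comb; apply/p_ker; eexists. Qed.

Lemma presentation_x_annihilates i : x *: e i = 0.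
Proof.
have := presentation_relations (fun k => (k == i)%:R) 0.
rewrite scale0r addr0 (bigD1 i) //= big1 => [|k ki]; last by rewrite (negbTE ki) scale0r.
by rewrite eqxx scale1r addr0.
Qed.

Lemma presentation_y_relation : y *: m + \sum_i a i *: e i = 0.
Proof.
have := presentation_relations (fun=> 0) 1.
by rewrite big1 ?add0r ?scale1r // => i _; rewrite scale0r.
Qed.

Lemma cycq_comb_col_snoc (u : {ffun 'I_n -> cycq x}) :
  cycq_comb e u = p (col_snoc (fun i => repr (u i)) 0).
Proof. by rewrite p_col_comb col_comb_snoc scale0r addr0. Qed.

HB.instance Definition _ := GRing.isLinear.Build R _ M *:%R (@cycq_comb R x n M e)
  (cycq_comb_is_linear presentation_x_annihilates).

Definition presentation_proj (m : M) : cycq y :=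
  \pi_(cycq y) (projT1 (cid (p_surj m)) ord_max 0).

Lemma presentation_proj_p v : presentation_proj (p v) = \pi_(cycq y) (v ord_max 0).
Proof.
rewrite /presentation_proj; case: cid => w /= /eqP; rewrite -subr_eq0 -linearB.
move/eqP/p_ker => [w' /(congr1 (fun z : 'cV_(n.+1) => z ord_max 0))].
rewrite [w']col_snocE Tmx_col_snoc col_snoc_max !mxE => yw'.
rewrite -[w ord_max 0](subrK (v ord_max 0)) -yw' pi_addr.
rewrite (_ : \pi_(cycq y) _ = 0) ?add0r //.
by apply/cycq_pi_eq0; exists (w' ord_max 0); rewrite mulrC.
Qed.

Lemma presentation_proj_is_linear : linear presentation_proj.
Proof.
move=> r m1 m2; have [v1 <-] := p_surj m1; have [v2 <-] := p_surj m2.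
by rewrite -linearP !presentation_proj_p !mxE pi_addr cycq_scalerE.
Qed.

HB.instance Definition _ :=
  GRing.isLinear.Build R M _ *:%R presentation_proj presentation_proj_is_linear.

Lemma presentation_inj_kernel (u : {ffun 'I_n -> cycq x}) : cycq_comb e u = 0 -> u = 0.
Proof.
rewrite cycq_comb_col_snoc => /p_ker [w]; rewrite [w]col_snocE Tmx_col_snoc.
case/col_snoc_inj => repr_u yw0; apply/ffunP => i; rewrite ffunE -[u i]reprK -repr_u.
have [c ->] : exists c, a i * w ord_max 0 = c * x.
  by apply: a_colon; rewrite /ann0 mulrC.
by apply/cycq_pi_eq0; exists (w (lift ord_max i) 0 + c); rewrite mulrDl mulrC.
Qed.

Lemma presentation_proj_kernel m' :
  presentation_proj m' = 0 <-> exists u : {ffun 'I_n -> cycq x}, cycq_comb e u = m'.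
Proof.
split=> [|[u <-]]; last first.
  by rewrite cycq_comb_col_snoc presentation_proj_p col_snoc_max pi_zeror.
have [v <-] := p_surj m'; rewrite presentation_proj_p => /cycq_pi_eq0 [d vd].
exists [ffun i => \pi_(cycq x) (v (lift ord_max i) 0 - d * a i)].
rewrite cycq_comb_pi; last exact: presentation_x_annihilates.
rewrite [in RHS]p_col_comb /col_comb vd -scalerA.
have -> : y *: m = - \sum_i a i *: e i.
  by apply/eqP; rewrite -addr_eq0 presentation_y_relation.
rewrite scalerN scaler_sumr -sumrN -big_split; apply: eq_bigr => i _ /=.
by rewrite scalerBl scalerA.
Qed.

Lemma presentation_extension :
  exists (f : {linear {ffun 'I_n -> cycq x} -> M}) (g : {linear M -> cycq y}),
    [/\ injective f, (forall c, exists m, g m = c) &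
        (forall m, g m = 0 <-> exists u, f u = m)].
Proof.
exists (cycq_comb e : {linear _ -> M}), (presentation_proj : {linear M -> _}).
split; first exact: raddf_inj presentation_inj_kernel.
  move=> c; exists (p (col_snoc (fun=> 0) (repr c))).
  by rewrite /= presentation_proj_p col_snoc_max reprK.
exact: presentation_proj_kernel.
Qed.

End PresentationToExtension.

Section ExtensionToPresentation.
Variables (R : comNzRingType) (x y : R) (n : nat) (M : lmodType R).
Variables (f : {linear {ffun 'I_n -> cycq x} -> M}) (g : {linear M -> cycq y}).
Hypothesis f_inj : injective f.
Hypothesis g_ker : forall m, g m = 0 <-> exists u, f u = m.
Variables (m0 : M) (u0 : {ffun 'I_n -> cycq x}).
Hypothesis g_m0 : g m0 = \pi_(cycq y) 1.
Hypothesis f_u0 : f u0 = y *: m0.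

Let e i := f (cycq_unit x i).

Lemma f_cycq_comb u : f u = cycq_comb e u.
Proof. by rewrite {1}[u]cycq_comb_units linear_cycq_comb. Qed.

Lemma extension_x_annihilates i : x *: e i = 0.
Proof. by rewrite -linearZ cycq_unit_annihilated linear0. Qed.

Definition extension_coef i := - repr (u0 i).

Lemma extension_y_relation : y *: m0 + \sum_i extension_coef i *: e i = 0.
Proof.
rewrite -f_u0 f_cycq_comb -big_split big1 // => i _.
by rewrite /extension_coef scaleNr /= addrN.
Qed.

Lemma extension_coef_colon i : colon_ann x y (extension_coef i).
Proof.
move=> s ys0; have : f (s *: u0) = f 0.
  by rewrite linearZ_LR f_u0 scalerA ys0 scale0r linear0.
move/f_inj/(congr1 (fun u : {ffun 'I_n -> cycq x} => u i)); rewrite !ffunE.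
rewrite -[u0 i]reprK cycq_scalerE => /cycq_pi_eq0 [c sc].
by exists (- c); rewrite /extension_coef mulNr mulrC sc mulNr.
Qed.

Let p := col_comb e m0.

Lemma g_col_comb v : g (p v) = \pi_(cycq y) (v ord_max 0).
Proof.
rewrite linear_col_comb /col_comb /= g_m0 cycq_scalerE mulr1 big1 ?add0r // => i _.
by rewrite (iffRL (g_ker _)) ?scaler0 //; exists (cycq_unit x i).
Qed.

Lemma extension_surj m : exists v, p v = m.
Proof.
have /g_ker [u fu] : g (m - repr (g m) *: m0) = 0.
  by rewrite linearB linearZ_LR g_m0 cycq_scalerE mulr1 reprK subrr.
exists (col_snoc (fun i => repr (u i)) (repr (g m))).
by rewrite /p col_comb_snoc -/(cycq_comb e u) -f_cycq_comb fu subrK.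
Qed.

Lemma extension_kernel v : p v = 0 <-> exists w, Tmx x y extension_coef *m w = v.
Proof.
split=> [pv0|[w <-]]; last first.
  by rewrite /p [w]col_snocE col_comb_Tmx extension_y_relation big1 ?add0r ?scaler0
             // => i _; rewrite extension_x_annihilates scaler0.
have /cycq_pi_eq0 [d vd] : \pi_(cycq y) (v ord_max 0) = 0.
  by rewrite -g_col_comb pv0 linear0.
pose u := [ffun i => \pi_(cycq x) (v (lift ord_max i) 0 - d * extension_coef i)].
have /f_inj u0' : f u = f 0.
  rewrite linear0 -pv0 f_cycq_comb cycq_comb_pi; last exact: extension_x_annihilates.
  rewrite /p /col_comb vd -scalerA.
  have -> : y *: m0 = - \sum_i extension_coef i *: e i.
    by apply/eqP; rewrite -addr_eq0 extension_y_relation.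
  rewrite scalerN scaler_sumr -sumrN -big_split.
  by apply: eq_bigr => i _ /=; rewrite scalerBl scalerA.
have /fin_all_exists [c vc] i :
    exists c, v (lift ord_max i) 0 - d * extension_coef i = c * x.
  by apply/cycq_pi_eq0; have := congr1 (fun u : {ffun _ -> _} => u i) u0'; rewrite !ffunE.
exists (col_snoc c d); rewrite Tmx_col_snoc [RHS]col_snocE vd mulrC; congr col_snoc.
by apply: funext => i; rewrite mulrC -vc mulrC subrK.
Qed.

Lemma extension_presentation :
  exists a : 'I_n -> R, (forall i, colon_ann x y (a i)) /\
    exists p : {linear 'cV[R]_(n.+1) -> M},
      (forall m, exists v, p v = m) /\
      (forall v, p v = 0 <-> exists w, Tmx x y a *m w = v).
Proof.
exists extension_coef; split; first exact: extension_coef_colon.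
exists (col_comb e m0 : {linear _ -> M}).
by split; [exact: extension_surj | exact: extension_kernel].
Qed.

End ExtensionToPresentation.

Theorem lemma3p3 (R : comNzRingType) (x y : R) (n : nat) (M : lmodType R) :
  noetherian_ring R -> local_ring R ->
  ((exists (f : {linear {ffun 'I_n -> cycq x} -> M}) (g : {linear M -> cycq y}),
      [/\ injective f,
          (forall c : cycq y, exists m : M, g m = c) &
          (forall m : M, g m = 0 <-> exists u, f u = m)])
  <->
   (exists a : 'I_n -> R,
      (forall i, colon_ann x y (a i)) /\
      exists p : {linear 'cV[R]_(n.+1) -> M},
        (forall m : M, exists v, p v = m) /\
        (forall v : 'cV[R]_(n.+1), p v = 0 <-> exists w, Tmx x y a *m w = v))).
Proof.
move=> _ _; split=> [[f [g [f_inj g_surj g_ker]]] | [a [a_colon [p [p_surj p_ker]]]]].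
  have [m0 g_m0] := g_surj (\pi_(cycq y) 1).
  have /g_ker [u0 f_u0] : g (y *: m0) = 0 by rewrite linearZ_LR g_m0 cycq_pi1.
  exact: (extension_presentation f_inj g_ker g_m0 f_u0).
exact: (presentation_extension a_colon p_surj p_ker).
Qed.
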